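(* Let $W$ be an irreducible euclidean Coxeter group not of type $\widetilde A_n$ and $\sigma$ a chamber of its Coxeter complex, with bipartite faces $F_0,F_1$, bipartite subspaces $B_0,B_1$ and closest points $x_0\in B_0$, $x_1\in B_1$. Then for $i=0,1$, the point $x_i$ lies in the (relative) interior of the face $F_i$. In particular, the bipartite line of $\sigma$ intersects the interior of $\sigma$.
   Context: $W$ acts on a euclidean space $E$, generated by reflections in the facets of a euclidean simplex with dihedral angles submultiples of $\pi$, properly and cocompactly; chambers are images of this simplex. The diagram $\Gamma$ (a tree here) has a unique bipartition, giving a partition $S_0\sqcup S_1$ of the reflections in the facets of $\sigma$; $F_j$ (bipartite face) is the face of $\sigma$ obtained by intersecting $\sigma$ with the hyperplanes of the reflections in $S_j$, and $B_j$ (bipartite subspace) is the affine hull of $F_j$. $B_0,B_1$ are disjoint and $x_0,x_1$ are the unique points realizing the minimal distance between them; the bipartite line is the line through $x_0$ and $x_1$. *)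

From HB Require Import structures.
From mathcomp Require Import all_boot all_order all_algebra.
From mathcomp Require Import all_classical all_reals all_analysis.
From mathcomp Require Import fingroup perm.
Set Implicit Arguments. Unset Strict Implicit. Unset Printing Implicit Defensive.
Import Order.TTheory GRing.Theory Num.Theory.
Import numFieldNormedType.Exports.
Local Open Scope classical_set_scope.
Local Open Scope ring_scope.

Definition dotp {R : realType} {n : nat} (u v : 'rV[R]_n) : R := (u *m v^T) 0 0.

(* A euclidean simplex given by n+1 facet hyperplanes  <a i, x> = b i,
   with outward normals a i:  sigma = { x | <a i, x> <= b i for all i }. *)
Definition chamber {R : realType} {n : nat}
  (a : 'I_n.+1 -> 'rV[R]_n) (b : 'I_n.+1 -> R) : set 'rV[R]_n :=
  [set x | forall i, dotp (a i) x <= b i].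

Definition diagram_edge {n : nat} (m : 'I_n.+1 -> 'I_n.+1 -> nat) : rel 'I_n.+1 :=
  fun i j => (i != j) && (3 <= m i j)%N.

Definition irreducible_diagram {n : nat} (m : 'I_n.+1 -> 'I_n.+1 -> nat) : Prop :=
  forall i j, connect (diagram_edge m) i j.

(* Type  ~A_n : the diagram is a cycle through all n+1 nodes with all labels 3
   (for n >= 2; the labels of non-adjacent nodes are 2). *)
Definition type_Atilde {n : nat} (m : 'I_n.+1 -> 'I_n.+1 -> nat) : Prop :=
  exists p : {perm 'I_n.+1}, forall k l : 'I_n.+1, k != l ->
    m (p k) (p l) =
      (if ((l : nat) == (k.+1 %% n.+1)%N) || ((k : nat) == (l.+1 %% n.+1)%N)
       then 3 else 2)%N.

(* The face of sigma cut out by the facet hyperplanes of the reflections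
   whose colour is j (bipartite face F_j). *)
Definition bip_face {R : realType} {n : nat}
  (a : 'I_n.+1 -> 'rV[R]_n) (b : 'I_n.+1 -> R) (c : 'I_n.+1 -> bool) (j : bool)
  : set 'rV[R]_n :=
  [set x | chamber a b x /\ forall i, c i = j -> dotp (a i) x = b i].

Definition affine_hull {R : realType} {n : nat} (A : set 'rV[R]_n) : set 'rV[R]_n :=
  [set y | exists (k : nat) (w : 'I_k -> R) (p : 'I_k -> 'rV[R]_n),
      \sum_(t < k) w t = 1 /\ (forall t, A (p t)) /\ y = \sum_(t < k) w t *: p t].

Definition rel_interior {R : realType} {n : nat} (A : set 'rV[R]_n) : set 'rV[R]_n :=
  [set x | A x /\ exists e : R, 0 < e /\
      forall y, affine_hull A y -> dotp (y - x) (y - x) < e ^+ 2 -> A y].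

From HB Require Import structures.
From mathcomp Require Import all_boot all_order all_algebra.
From mathcomp Require Import all_classical all_reals all_analysis.
From mathcomp Require Import fingroup perm.
From mathcomp.algebra_tactics Require Import ring lra.
Set Implicit Arguments. Unset Strict Implicit. Unset Printing Implicit Defensive.
Import Order.TTheory GRing.Theory Num.Theory.
Import numFieldNormedType.Exports.
Local Open Scope classical_set_scope.
Local Open Scope ring_scope.

(* Let [v l] be the vertex of sigma opposite the facet [l] and [w = x0 - x1].
   Moving [x0] inside [B0] towards a vertex [v l] with [l] in [S1] cannot
   decrease the distance, so [w] is orthogonal to [v l - x0]; likewise for
   [x1].  Expanding [a j] in barycentric coordinates then gives, for [j] in
   [S1],
      <w, a j> = |w|^2 * sum_(l in S0) <a l, a j> / (b l - <a l, v l>).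
   All summands are <= 0 since [<a l, a j> = - cos (pi / m l j)], and a
   neighbour of [j] in the diagram (which lies in [S0]) contributes a
   negative one.  Hence [<a j, x0> < <a j, x1> = b j]: [x0] is strictly inside
   every facet not containing [F0], i.e. in the relative interior of [F0], and
   symmetrically for [x1]; the midpoint of [x0 x1] is then strictly inside
   every facet of sigma. *)

Section DotProduct.
Context {R : realType} {n : nat}.
Implicit Types u v w : 'rV[R]_n.

Lemma dotpE u v : dotp u v = \sum_j u 0 j * v 0 j.
Proof. by rewrite /dotp !mxE; apply: eq_bigr => j _; rewrite !mxE. Qed.

Lemma dotpC u v : dotp u v = dotp v u.
Proof. by rewrite !dotpE; apply: eq_bigr => j _; rewrite mulrC. Qed.

Lemma dotpDr u v w : dotp u (v + w) = dotp u v + dotp u w.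
Proof. by rewrite !dotpE -big_split; apply: eq_bigr => j _; rewrite !mxE mulrDr. Qed.

Lemma dotpZr u v (k : R) : dotp u (k *: v) = k * dotp u v.
Proof. by rewrite !dotpE mulr_sumr; apply: eq_bigr => j _; rewrite !mxE mulrCA. Qed.

Lemma dotpNr u v : dotp u (- v) = - dotp u v.
Proof. by rewrite -scaleN1r dotpZr mulN1r. Qed.

Lemma dotpBr u v w : dotp u (v - w) = dotp u v - dotp u w.
Proof. by rewrite dotpDr dotpNr. Qed.

Lemma dotp0r u : dotp u 0 = 0.
Proof. by rewrite -(scale0r 0) dotpZr mul0r. Qed.

Lemma dotpDl u v w : dotp (v + w) u = dotp v u + dotp w u.
Proof. by rewrite dotpC dotpDr !(dotpC u). Qed.

Lemma dotpZl u v (k : R) : dotp (k *: v) u = k * dotp v u.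
Proof. by rewrite dotpC dotpZr dotpC. Qed.

Lemma dotpNl u v : dotp (- v) u = - dotp v u.
Proof. by rewrite dotpC dotpNr dotpC. Qed.

Lemma dotpBl u v w : dotp (v - w) u = dotp v u - dotp w u.
Proof. by rewrite dotpC dotpBr !(dotpC u). Qed.

Lemma dotp_sumr u (I : Type) (r : seq I) (P : pred I) (F : I -> 'rV[R]_n) :
  dotp u (\sum_(t <- r | P t) F t) = \sum_(t <- r | P t) dotp u (F t).
Proof.
elim/big_rec2: _ => [|t x y _ <-]; first by rewrite dotp0r.
by rewrite dotpDr.
Qed.

Lemma dotp_ge0 u : 0 <= dotp u u.
Proof. by rewrite dotpE sumr_ge0 // => j _; rewrite -expr2 sqr_ge0. Qed.

Lemma dotp_eq0 u : (dotp u u == 0) = (u == 0).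
Proof.
apply/idP/eqP => [|->]; last by rewrite dotp0r.
rewrite dotpE psumr_eq0; last by move=> j _; rewrite -expr2 sqr_ge0.
move=> /allP u0; apply/rowP => j; rewrite mxE.
by have /= := u0 j (mem_index_enum j); rewrite mulf_eq0 orbb => /eqP.
Qed.

Lemma dotp_gt0 u : (0 < dotp u u) = (u != 0).
Proof. by rewrite lt_neqAle dotp_ge0 andbT eq_sym dotp_eq0. Qed.

Lemma dotpNN u v : dotp (u - v) (u - v) = dotp (v - u) (v - u).
Proof. by rewrite -opprB dotpNl dotpNr opprK. Qed.

(* [0 <= |e u - d|^2] expands to [2 e <u, d> <= e^2 + |d|^2 < 2 e^2]. *)
Lemma dotp_unit_lt u d (e : R) : 0 < e -> dotp u u = 1 -> dotp d d < e ^+ 2 ->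
  dotp u d < e.
Proof.
move=> e0 u1 dd.
have := dotp_ge0 (e *: u - d).
rewrite dotpBl !dotpBr !dotpZl !dotpZr u1 (dotpC d u) => H.
have : 2 * e * dotp u d < 2 * e * e by nra.
by rewrite ltr_pM2l ?mulr_gt0.
Qed.

Lemma dotp_eq0_of_min w d :
  (forall s : R, dotp w w <= dotp (w + s *: d) (w + s *: d)) -> dotp w d = 0.
Proof.
move=> wmin; set c := dotp w d; set D := dotp d d.
have D0 : 0 <= D by apply: dotp_ge0.
have D1 : 0 < D + 1 by lra.
set s := - c / (D + 1).
have := wmin s; rewrite !dotpDl !dotpDr !dotpZl !dotpZr (dotpC d w) -/c -/D.
have cE : c = - (s * (D + 1)) by rewrite /s divfK ?gt_eqF // opprK.
rewrite cE => h.
have ss : s * s * (D + 2) <= 0 by nra.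
have s0 : s = 0.
  apply/eqP; rewrite -sqrf_eq0 eq_le sqr_ge0 andbT expr2.
  by rewrite -(pmulr_lle0 _ (_ : 0 < D + 2)) //; lra.
by rewrite s0 mul0r oppr0.
Qed.

End DotProduct.

Section BoundedChamber.
Variables (R : realType) (n : nat).
Variables (a : 'I_n.+1 -> 'rV[R]_n) (b : 'I_n.+1 -> R).
Hypothesis chamber_nondeg : exists x, forall i, dotp (a i) x < b i.
Hypothesis chamber_bounded : exists M, forall x, chamber a b x -> dotp x x <= M.

(* Along the ray [p + s d] the squared norm grows like [s^2 |d|^2]. *)
Lemma chamber_recession_eq0 p d :
  chamber a b p -> (forall i, dotp (a i) d <= 0) -> d = 0.
Proof.
have [M bnd] := chamber_bounded.
move=> cp dn; apply/eqP; rewrite -dotp_eq0.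
have ray s : 0 <= s -> dotp p p + 2 * s * dotp p d + s ^+ 2 * dotp d d <= M.
  move=> s0; have : chamber a b (p + s *: d).
    by move=> i; rewrite dotpDr dotpZr; have := cp i; have := dn i; nra.
  by move=> /bnd; rewrite !dotpDl !dotpDr !dotpZl !dotpZr (dotpC d p); nra.
rewrite eq_le dotp_ge0 andbT leNgt; apply/negP => D0.
set D := dotp d d in ray D0; set c := dotp p d in ray.
have P0 : 0 <= dotp p p by apply: dotp_ge0.
set s := 1 + (`|M| + 2 * `|c| + 1) / D.
have s1 : 1 <= s by rewrite lerDl divr_ge0 // ?ltW //; lra.
have sD : s * D = D + (`|M| + 2 * `|c| + 1) by rewrite mulrDl mul1r divfK ?gt_eqF.
have cc : - `|c| <= c by rewrite lerNl -normrN ler_norm.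
have MM : M <= `|M| by rewrite ler_norm.
have hsc : - (2 * s * `|c|) <= 2 * s * c by nra.
have := ray s (le_trans ler01 s1).
rewrite [_ * D](_ : _ = s * (D + (`|M| + 2 * `|c| + 1))); last by rewrite -sD expr2 mulrA.
have : `|M| + 1 <= s * (`|M| + 1) by rewrite ler_peMl // addr_ge0.
nra.
Qed.

Lemma chamber_normals_eq0 k y : (forall i, i != k -> dotp (a i) y = 0) -> y = 0.
Proof.
have [xs xs_int] := chamber_nondeg.
have cxs : chamber a b xs by move=> i; apply: ltW.
move=> y0; have [yk|yk] := lerP (dotp (a k) y) 0.
  apply: (chamber_recession_eq0 cxs) => i.
  by have [->//|ik] := eqVneq i k; rewrite y0.
apply/eqP; rewrite -oppr_eq0; apply/eqP; apply: (chamber_recession_eq0 cxs) => i.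
rewrite dotpNr; have [->|ik] := eqVneq i k; first by rewrite oppr_le0 ltW.
by rewrite y0 // oppr0.
Qed.

Lemma chamber_vertex k : exists v, forall i, i != k -> dotp (a i) v = b i.
Proof.
pose A : 'M[R]_n := \matrix_(r, j) a (lift k j) 0 r.
have AE v j : (v *m A) 0 j = dotp (a (lift k j)) v.
  by rewrite dotpC dotpE mxE; apply: eq_bigr => r _; rewrite mxE.
have A_unit : A \in unitmx.
  rewrite unitmxE unitfE; apply/negP => /det0P [v v0 vA].
  suff : v = 0 by move/eqP: v0.
  apply: (@chamber_normals_eq0 k) => i ik.
  rewrite eq_sym in ik; have [j -> _] := unlift_some ik.
  by rewrite -AE vA mxE.
exists ((\row_j b (lift k j)) *m invmx A) => i ik.
rewrite eq_sym in ik; have [j -> _] := unlift_some ik.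
by rewrite -AE mulmxKV // mxE.
Qed.

Lemma chamber_vertex_slack k v :
  (forall i, i != k -> dotp (a i) v = b i) -> dotp (a k) v < b k.
Proof.
have [xs xs_int] := chamber_nondeg.
have cxs : chamber a b xs by move=> i; apply: ltW.
move=> vk; rewrite ltNge; apply/negP => vb.
have : xs - v = 0.
  apply: (chamber_recession_eq0 cxs) => i; rewrite dotpBr.
  have [->|ik] := eqVneq i k; first by have := xs_int k; lra.
  by rewrite vk //; have := xs_int i; lra.
move/eqP; rewrite subr_eq0 => /eqP xsv.
by have := xs_int k; rewrite xsv; lra.
Qed.

Lemma chamber_not_all_tight p : ~ (forall i, dotp (a i) p = b i).
Proof.
move=> tight; have := @chamber_vertex_slack ord0 p (fun i _ => tight i).
by rewrite tight ltxx.
Qed.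

Lemma interior_chamber p : (forall i, dotp (a i) p < b i) -> interior (chamber a b) p.
Proof.
move=> hp.
suff : \forall y \near p, forall i, dotp (a i) y <= b i by [].
apply: (filter_forall (nbhs_filter p)) => i.
set K := 1 + \sum_j `|a i 0 j|.
have K0 : 0 < K by rewrite /K ltr_pwDl // sumr_ge0.
have s0 : 0 < b i - dotp (a i) p by rewrite subr_gt0.
apply/nbhs_ballP; exists ((b i - dotp (a i) p) / K); first by rewrite /= divr_gt0.
move=> y hy.
have hb j : `|y 0 j - p 0 j| < (b i - dotp (a i) p) / K.
  by move: hy; rewrite /ball /= /mx_ball => -[_ /(_ 0 j)]; rewrite /ball /= distrC.
have : dotp (a i) (y - p) <= (\sum_j `|a i 0 j|) * ((b i - dotp (a i) p) / K).
  rewrite dotpE mulr_suml; apply: ler_sum => j _.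
  apply: (le_trans (ler_norm _)); rewrite normrM ?mxE.
  by apply: ler_wpM2l => //; apply: ltW; have := hb j; rewrite ?mxE.
have : (\sum_j `|a i 0 j|) * ((b i - dotp (a i) p) / K) < b i - dotp (a i) p.
  rewrite mulrA ltr_pdivrMr //.
  by rewrite /K [X in _ < X]mulrDr mulr1 [X in _ < _ + X]mulrC ltrDr.
by rewrite /= dotpBr; lra.
Qed.

End BoundedChamber.

Section AffineHull.
Context {R : realType} {n : nat}.
Implicit Types (a : 'I_n.+1 -> 'rV[R]_n) (b : 'I_n.+1 -> R) (A : set 'rV[R]_n).

Lemma affine_hull_segment A y p s : affine_hull A y -> A p ->
  affine_hull A ((1 - s) *: y + s *: p).
Proof.
move=> [k [w [q [w1 [Aq ->]]]]] Ap.
exists k.+1, (fun t => if unlift ord0 t is Some t' then (1 - s) * w t' else s),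
  (fun t => if unlift ord0 t is Some t' then q t' else p).
split; [|split].
- rewrite big_ord_recl /= unlift_none.
  under eq_bigr => t _ do rewrite liftK.
  by rewrite -mulr_sumr w1 mulr1 addrC subrK.
- by move=> t; case: (unlift _ t).
- rewrite big_ord_recl /= unlift_none.
  under [X in _ = _ + X]eq_bigr => t _ do rewrite liftK.
  by rewrite scaler_sumr addrC; congr (_ + _); apply: eq_bigr => t _; rewrite scalerA.
Qed.

Lemma affine_hull_bip_face_tight a b c j y i :
  affine_hull (bip_face a b c j) y -> c i = j -> dotp (a i) y = b i.
Proof.
move=> [k [w [p [w1 [Fp ->]]]]] ci; rewrite dotp_sumr.
under eq_bigr => t _ do rewrite dotpZr (proj2 (Fp t) i ci).
by rewrite -mulr_suml w1 mul1r.
Qed.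

(* Within [B j] the face [F j] is cut out by the facets of the other colour
   only, so strict inequalities there leave room for a ball of radius the
   smallest slack. *)
Lemma rel_interior_bip_face a b c j y :
  (forall i, dotp (a i) (a i) = 1) ->
  affine_hull (bip_face a b c j) y ->
  (forall i, c i = ~~ j -> dotp (a i) y < b i) ->
  rel_interior (bip_face a b c j) y.
Proof.
move=> a_unit By y_lt.
have tight z i : affine_hull (bip_face a b c j) z -> c i = j -> dotp (a i) z = b i.
  exact: affine_hull_bip_face_tight.
have other i : c i != j -> c i = ~~ j by case: (c i); case: (j).
set e := \big[Order.min/1]_(i | c i != j) (b i - dotp (a i) y).
have e0 : 0 < e.
  by apply: lt_bigmin => // i ci; rewrite subr_gt0; apply/y_lt/other.
have e_le i : c i != j -> e <= b i - dotp (a i) y by move=> ci; apply: bigmin_le_cond.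
split.
  split=> [i|i]; last exact: tight.
  by case: (eqVneq (c i) j) => [ci|ci]; [rewrite tight | apply/ltW/y_lt/other].
exists e; split => // z Bz yz; split=> [i|i]; last exact: tight.
case: (eqVneq (c i) j) => [ci|ci]; first by rewrite tight.
have := dotp_unit_lt e0 (a_unit i) yz; have := e_le i ci.
by rewrite dotpBr; lra.
Qed.

End AffineHull.

Section ClosestPoints.
Variables (R : realType) (n : nat).
Variables (a : 'I_n.+1 -> 'rV[R]_n) (b : 'I_n.+1 -> R).
Hypothesis chamber_nondeg : exists x, forall i, dotp (a i) x < b i.
Hypothesis chamber_bounded : exists M, forall x, chamber a b x -> dotp x x <= M.
Variable v : 'I_n.+1 -> 'rV[R]_n.
Hypothesis v_tight : forall k i, i != k -> dotp (a i) (v k) = b i.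

Let slack l := b l - dotp (a l) (v l).

Lemma vertex_slack_gt0 l : 0 < slack l.
Proof. by rewrite subr_gt0; apply: chamber_vertex_slack => //; apply: v_tight. Qed.

(* Barycentric expansion of a vector in the edge directions [v l - v k]:
   both sides have the same dot product with every [a i], [i != k]. *)
Lemma vertex_expansion k z :
  z = - \sum_l (dotp (a l) z / slack l) *: (v l - v k).
Proof.
apply/eqP; rewrite -subr_eq0 opprK; apply/eqP.
apply: (chamber_normals_eq0 chamber_nondeg chamber_bounded (k := k)) => i ik.
rewrite dotpDr (bigD1 i) //= dotpDr dotpZr dotpBr (v_tight ik) dotp_sumr big1 ?addr0.
  by rewrite /slack; have := vertex_slack_gt0 i; rewrite /slack => ?; field; rewrite gt_eqF.
move=> l li; rewrite dotpZr dotpBr (v_tight ik) v_tight ?subrr ?mulr0 //.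
by rewrite eq_sym.
Qed.

Variables (c : 'I_n.+1 -> bool) (col : bool) (P Q : 'rV[R]_n).
Hypothesis P_in : affine_hull (bip_face a b c col) P.
Hypothesis Q_in : affine_hull (bip_face a b c (~~ col)) Q.
Hypothesis PQ_closest : forall y z,
  affine_hull (bip_face a b c col) y -> affine_hull (bip_face a b c (~~ col)) z ->
  dotp (P - Q) (P - Q) <= dotp (y - z) (y - z).

Lemma vertex_bip_face l j : c l != j -> bip_face a b c j (v l).
Proof.
move=> cl; split=> i.
  have [->|il] := eqVneq i l; first by have := vertex_slack_gt0 l; rewrite /slack; lra.
  by rewrite v_tight.
by move=> ci; apply: v_tight; apply: contraNneq cl => <-; rewrite ci.
Qed.

Lemma closest_orthoP l : c l = ~~ col -> dotp (P - Q) (v l - P) = 0.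
Proof.
move=> cl; apply: dotp_eq0_of_min => s.
have Fl : bip_face a b c col (v l) by apply: vertex_bip_face; rewrite cl; case: (col).
have := PQ_closest (affine_hull_segment s P_in Fl) Q_in.
suff -> : (1 - s) *: P + s *: v l - Q = P - Q + s *: (v l - P) by [].
by apply/rowP => t; rewrite !mxE; ring.
Qed.

Lemma closest_orthoQ l : c l = col -> dotp (P - Q) (v l - Q) = 0.
Proof.
move=> cl; apply/eqP; rewrite -oppr_eq0 -dotpNr; apply/eqP.
apply: dotp_eq0_of_min => s.
have Fl : bip_face a b c (~~ col) (v l) by apply: vertex_bip_face; rewrite cl; case: (col).
have := PQ_closest P_in (affine_hull_segment s Q_in Fl).
suff -> : P - ((1 - s) *: Q + s *: v l) = P - Q + s *: - (v l - Q) by [].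
by apply/rowP => t; rewrite !mxE; ring.
Qed.

Lemma closest_neq : P != Q.
Proof.
apply/eqP => PQ; apply: (chamber_not_all_tight chamber_nondeg chamber_bounded (p := P)) => i.
have [/eqP ci|ci] := boolP (c i == col); first exact: affine_hull_bip_face_tight P_in ci.
rewrite PQ; apply: (affine_hull_bip_face_tight Q_in).
by move: ci; case: (c i); case: (col).
Qed.

Lemma closest_dotp k z : c k = ~~ col ->
  dotp (P - Q) z = dotp (P - Q) (P - Q) * \sum_(l | c l == col) dotp (a l) z / slack l.
Proof.
move=> ck; set w := P - Q.
have oPk := closest_orthoP ck; rewrite -/w dotpBr in oPk.
rewrite {1}(vertex_expansion k z) dotpNr dotp_sumr.
rewrite (bigID (fun l => c l == col)) /= [X in _ + X]big1 ?addr0.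
  rewrite mulr_sumr -sumrN; apply: eq_bigr => l /eqP cl.
  have oQl := closest_orthoQ cl; rewrite -/w dotpBr in oQl.
  rewrite dotpZr dotpBr.
  have -> : dotp w (v l) - dotp w (v k) = - (dotp w P - dotp w Q) by lra.
  by rewrite -dotpBr -/w; ring.
move=> l cl; have cl' : c l = ~~ col by move: cl; case: (c l); case: (col).
have oPl := closest_orthoP cl'; rewrite -/w dotpBr in oPl.
by rewrite dotpZr dotpBr (_ : _ - _ = 0) ?mulr0 //; lra.
Qed.

End ClosestPoints.

Lemma cos_pi_div_ge0 {R : realType} (m : nat) : (2 <= m)%N -> 0 <= cos (pi / m%:R : R).
Proof.
move=> m2; apply: cos_ge0_pihalf.
have p0 := @pi_gt0 R.
have m0 : (2 : R) <= m%:R by rewrite (ler_nat R 2 m).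
have mp : (0 : R) < m%:R by lra.
apply/andP; split.
  by apply: (le_trans (y := 0)); [rewrite oppr_le0 divr_ge0 ?ltW | rewrite divr_ge0 ?ltW].
rewrite ler_pdivrMr // (_ : _ * m%:R = pi * (m%:R / 2)); last by ring.
by rewrite -{1}(mulr1 pi) ler_pM2l //; lra.
Qed.

Lemma cos_pi_div_gt0 {R : realType} (m : nat) : (3 <= m)%N -> 0 < cos (pi / m%:R : R).
Proof.
move=> m3; apply: cos_gt0_pihalf.
have p0 := @pi_gt0 R.
have m0 : (3 : R) <= m%:R by rewrite (ler_nat R 3 m).
have mp : (0 : R) < m%:R by lra.
apply/andP; split.
  by apply: (lt_le_trans (y := 0)); [rewrite oppr_lt0 divr_gt0 | rewrite divr_ge0 ?ltW].
rewrite ltr_pdivrMr // (_ : _ * m%:R = pi * (m%:R / 2)); last by ring.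
by rewrite -{1}(mulr1 pi) ltr_pM2l //; lra.
Qed.

Lemma irreducible_diagram_neighbour n (m : 'I_n.+1 -> 'I_n.+1 -> nat) :
  (0 < n)%N -> irreducible_diagram m -> forall j, exists l, diagram_edge m j l.
Proof.
move=> n_gt0 irr j.
have [k kj] : exists k, k != j.
  have [->|jn] := eqVneq j ord0; last by exists ord0; rewrite eq_sym.
  by exists (lift ord0 (Ordinal n_gt0)); rewrite eq_sym neq_lift.
have /connectP [[|l p] /= jp kE] := irr j k; first by rewrite kE eqxx in kj.
by case/andP: jp => jl _; exists l.
Qed.

Section CoxeterChamber.
Variables (R : realType) (n : nat).
Variables (a : 'I_n.+1 -> 'rV[R]_n) (b : 'I_n.+1 -> R) (m : 'I_n.+1 -> 'I_n.+1 -> nat).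
Hypothesis n_gt0 : (0 < n)%N.
Hypothesis angles : forall i j, i != j ->
  (2 <= m i j)%N /\ dotp (a i) (a j) = - cos (pi / (m i j)%:R).
Hypothesis chamber_nondeg : exists x, forall i, dotp (a i) x < b i.
Hypothesis chamber_bounded : exists M, forall x, chamber a b x -> dotp x x <= M.
Hypothesis irr : irreducible_diagram m.
Variable c : 'I_n.+1 -> bool.
Hypothesis c_bip : forall i j, diagram_edge m i j -> c i != c j.

Lemma bipartite_normal_sum_lt0 (wt : 'I_n.+1 -> R) col j :
  (forall l, 0 < wt l) -> c j = ~~ col ->
  \sum_(l | c l == col) dotp (a l) (a j) / wt l < 0.
Proof.
move=> wt_gt0 cj; have [l0 jl0] := irreducible_diagram_neighbour n_gt0 irr j.
have cl0 : c l0 == col by have := c_bip jl0; rewrite cj; case: (c l0); case: (col).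
have l_neq l : c l == col -> l != j.
  by move=> /eqP cl; apply/eqP => lj; move: cj; rewrite -lj cl; case: (col).
have term_le0 l : c l == col -> dotp (a l) (a j) / wt l <= 0.
  move=> cl; have [m2 ->] := angles (l_neq l cl).
  apply: mulr_le0_ge0; last by rewrite invr_ge0 ltW.
  by rewrite oppr_le0 cos_pi_div_ge0.
have term_lt0 : dotp (a l0) (a j) / wt l0 < 0.
  case/andP: jl0 => jl0 m3; rewrite dotpC; have [_ ->] := angles jl0.
  by rewrite pmulr_llt0 ?invr_gt0 // oppr_lt0 cos_pi_div_gt0.
rewrite (bigD1 l0) //=.
have : \sum_(i | (c i == col) && (i != l0)) dotp (a i) (a j) / wt i <= 0.
  by apply: sumr_le0 => i /andP [ci _]; apply: term_le0.
lra.
Qed.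

Lemma closest_point_lt col P Q :
  affine_hull (bip_face a b c col) P -> affine_hull (bip_face a b c (~~ col)) Q ->
  (forall y z, affine_hull (bip_face a b c col) y ->
     affine_hull (bip_face a b c (~~ col)) z ->
     dotp (P - Q) (P - Q) <= dotp (y - z) (y - z)) ->
  forall j, c j = ~~ col -> dotp (a j) P < b j.
Proof.
move=> P_in Q_in PQ_closest j cj.
have [v v_tight] : exists v : 'I_n.+1 -> 'rV[R]_n,
    forall k i, i != k -> dotp (a i) (v k) = b i.
  have [v v_tight] := boolp.choice (chamber_vertex chamber_nondeg chamber_bounded).
  by exists v.
have slack_gt0 := vertex_slack_gt0 chamber_nondeg chamber_bounded v_tight.
have PQ_ortho := closest_dotp chamber_nondeg chamber_bounded v_tight
  P_in Q_in PQ_closest (a j) cj.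
have PQ_gt0 : 0 < dotp (P - Q) (P - Q).
  by rewrite dotp_gt0 subr_eq0 (closest_neq chamber_nondeg chamber_bounded P_in Q_in).
have : dotp (P - Q) (a j) < 0.
  by rewrite PQ_ortho pmulr_rlt0 // (bipartite_normal_sum_lt0 slack_gt0 cj).
by rewrite dotpC dotpBr (affine_hull_bip_face_tight Q_in cj); lra.
Qed.

End CoxeterChamber.

Theorem lemma8p5 (R : realType) (n : nat) (n_gt0 : (0 < n)%N)
  (a : 'I_n.+1 -> 'rV[R]_n) (b : 'I_n.+1 -> R) (m : 'I_n.+1 -> 'I_n.+1 -> nat)
  (a_unit : forall i, dotp (a i) (a i) = 1)
  (angles : forall i j, i != j ->
     (2 <= m i j)%N /\ dotp (a i) (a j) = - cos (pi / (m i j)%:R))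
  (sigma_nondeg : exists x, forall i, dotp (a i) x < b i)
  (sigma_bounded : exists M : R, forall x, chamber a b x -> dotp x x <= M)
  (irr : irreducible_diagram m)
  (notA : ~ type_Atilde m)
  (c : 'I_n.+1 -> bool)
  (c_bip : forall i j, diagram_edge m i j -> c i != c j)
  (x0 x1 : 'rV[R]_n)
  (x0B : affine_hull (bip_face a b c false) x0)
  (x1B : affine_hull (bip_face a b c true) x1)
  (x_closest : forall y0 y1,
     affine_hull (bip_face a b c false) y0 ->
     affine_hull (bip_face a b c true) y1 ->
     dotp (x0 - x1) (x0 - x1) <= dotp (y0 - y1) (y0 - y1)) :
  rel_interior (bip_face a b c false) x0 /\
  rel_interior (bip_face a b c true) x1 /\
  exists t : R, interior (chamber a b) ((1 - t) *: x0 + t *: x1).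
Proof.
have x0_lt := closest_point_lt n_gt0 angles sigma_nondeg sigma_bounded irr c_bip
  x0B x1B x_closest.
have x1_lt := closest_point_lt n_gt0 angles sigma_nondeg sigma_bounded irr c_bip
  (col := true) x1B x0B.
have /x1_lt {}x1_lt : forall y0 y1, affine_hull (bip_face a b c true) y0 ->
    affine_hull (bip_face a b c false) y1 ->
    dotp (x1 - x0) (x1 - x0) <= dotp (y0 - y1) (y0 - y1).
  by move=> y0 y1 B1y0 B0y1; rewrite dotpNN (dotpNN y0); apply: x_closest.
split; first exact: rel_interior_bip_face.
split; first exact: rel_interior_bip_face.
exists (1 / 2); apply: interior_chamber => i; rewrite dotpDr !dotpZr.
case ci: (c i).
  by have := x0_lt i ci; have := affine_hull_bip_face_tight x1B ci; lra.
by have := x1_lt i ci; have := affine_hull_bip_face_tight x0B ci; lra.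
Qed.
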